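(* Let $\mathbb{I}>0$, $0<c\le1$, and for $\ell>0$ let $g_c(\ell)=4c\ell^2\int_0^\infty u^2\,\Phi\big(-\frac{u\ell\sqrt{c\mathbb{I}}}{2}\big)\phi(u)\,du$. Then $g_c$ is maximized at $\ell_{opt}=\frac{2.426}{\sqrt{c\,\mathbb{I}}}$ (constant to three decimals), and $$\alpha_{opt}=4\int_0^\infty\Phi\Big(-\frac{u\ell_{opt}\sqrt{c\,\mathbb{I}}}{2}\Big)\phi(u)\,du=0.439$$ up to three decimal places.
   Context: $\Phi,\phi$ are the standard normal cdf and density. $g_c$ is the diffusion speed of the limiting diffusion of additive TMCMC-within-Gibbs for i.i.d. product targets (each coordinate updated with probability tending to $c$), $\mathbb{I}=E_f[(f'/f)^2]$ is the Fisher information of the marginal density $f$, and $\alpha_{opt}$ is the corresponding optimal acceptance rate. *)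

From Stdlib Require Import Reals.
From Coquelicot Require Import Coquelicot.
Open Scope R_scope.

Definition std_phi (x : R) : R := exp (- x ^ 2 / 2) / sqrt (2 * PI).

Definition std_Phi (x : R) : R :=
  RInt_gen std_phi (Rbar_locally m_infty) (at_point x).

Definition g_c (c I l : R) : R :=
  4 * c * l ^ 2 *
  RInt_gen (fun u => u ^ 2 * std_Phi (- (u * l * sqrt (c * I)) / 2) * std_phi u)
           (at_point 0) (Rbar_locally p_infty).

Definition alpha_acc (c I l : R) : R :=
  4 * RInt_gen (fun u => std_Phi (- (u * l * sqrt (c * I)) / 2) * std_phi u)
           (at_point 0) (Rbar_locally p_infty).

From Stdlib Require Import Reals Lra.
From Coquelicot Require Import Coquelicot.
Open Scope R_scope.

(* Put [a = l sqrt(c I) / 2] and [phi_int x = int_0^x phi], so that [Phi(-a u) = Phi(0) - phi_int (a u)]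
   with [Phi(0) = phi_int_inf], the limit of [phi_int] at infinity.
   Owen's T function [T(h, a) = 1/(2 PI) int_0^a exp(-h^2 (1 + x^2) / 2) / (1 + x^2) dx] satisfies
   [d/dh T(h, a) = - phi(h) phi_int (a h)], [T(0, a) = atan a / (2 PI)] and [T(h, a) -> 0], hence
   [Phi(0) phi_int + T] is an antiderivative of [(Phi(0) - phi_int (a u)) phi(u)] and
   [int_0^oo (Phi(0) - phi_int (a u)) phi(u) du = Phi(0)^2 - atan a / (2 PI)].
   This identity also yields [Phi(0) = 1/2]: the integral is nonnegative, and it tends to [0] as [a -> oo].
   One integration by parts more gives the second moment, so that
   [alpha = 1 - (2/PI) atan a] and [g_c = (16/I) a^2 (1/4 - atan a / (2 PI) - a / (2 PI (1 + a^2)))].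
   The derivative of the last factor [a^2 (...)] is [a/PI] times a function that decreases on [[0, 17/10]]
   and is negative beyond, so the maximiser is its unique positive root, which Taylor bounds for
   [atan] and Machin's formula for [PI] locate in [[1.21275, 1.21325]]. *)

Lemma le_of_derive_nonneg (f df : R -> R) (x y : R) :
  x <= y -> (forall t, x <= t <= y -> is_derive f t (df t)) ->
  (forall t, x <= t <= y -> 0 <= df t) -> f x <= f y.
Proof.
  intros Hxy Hd Hp.
  destruct (MVT_gen f x y df) as [c [Hc Heq]];
    rewrite ?Rmin_left, ?Rmax_right in * by lra.
  - intros t Ht; apply Hd; lra.
  - intros t Ht. apply continuity_pt_filterlim, (ex_derive_continuous (V := R_NormedModule)).
    eexists; apply Hd; lra.
  - assert (0 <= df c * (y - x)) by (apply Rmult_le_pos; [apply Hp|]; lra). lra.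
Qed.

Lemma lt_of_derive_pos (f df : R -> R) (x y : R) :
  x < y -> (forall t, x <= t <= y -> is_derive f t (df t)) ->
  (forall t, x < t < y -> 0 < df t) -> f x < f y.
Proof.
  intros Hxy Hd Hp.
  destruct (MVT_cor2 f df x y Hxy) as [c [E Hc]].
  - intros t Ht. apply is_derive_Reals, Hd, Ht.
  - assert (0 < df c * (y - x)) by (apply Rmult_lt_0_compat; [apply Hp|]; lra). lra.
Qed.

Lemma exp_le_exp x y : x <= y -> exp x <= exp y.
Proof. intros [H|<-]; [left; now apply exp_increasing | apply Rle_refl]. Qed.

Lemma exp_neg_sq_half_le x : 0 < x -> exp (- x ^ 2 / 2) <= 2 / x ^ 2.
Proof.
  intros Hx. replace (- x ^ 2 / 2) with (- (x ^ 2 / 2)) by field. rewrite exp_Ropp.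
  replace (2 / x ^ 2) with (/ (x ^ 2 / 2)) by (field; lra).
  apply Rinv_le_contravar; [nra|]. generalize (exp_ineq1_le (x ^ 2 / 2)). lra.
Qed.

Lemma one_plus_sq_pos x : 0 < 1 + x ^ 2.
Proof. generalize (pow2_ge_0 x). lra. Qed.

Lemma filterlim_at_point (f : R -> R) (x : R) : filterlim f (at_point x) (locally (f x)).
Proof. intros P HP. exact (locally_singleton _ _ HP). Qed.

Lemma is_RInt_gen_of_derive {Fa Fb : (R -> Prop) -> Prop} {FFa : Filter Fa} {FFb : Filter Fb}
  (f F : R -> R) (la lb : R) :
  (forall x, is_derive F x (f x)) -> (forall x, continuous f x) ->
  filterlim F Fa (locally la) -> filterlim F Fb (locally lb) ->
  is_RInt_gen f Fa Fb (lb - la).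
Proof.
  intros HF Hf Ha Hb.
  assert (DF : forall x, Derive F x = f x) by (intros; apply is_derive_unique, HF).
  apply (is_RInt_gen_ext (Derive F)).
  { apply filter_forall. intros [a b] x _. apply DF. }
  apply is_RInt_gen_Derive; auto; apply filter_forall; intros [a b] x _.
  - eexists; apply HF.
  - apply (continuous_ext f); auto.
Qed.

Lemma is_lim_p_infty_of_nondecreasing (f : R -> R) (K : R) :
  (forall x y, x <= y -> f x <= f y) -> (forall x, f x <= K) ->
  { L : R | is_lim f p_infty L /\ forall x, f x <= L }.
Proof.
  intros Hmono Hbnd.
  destruct (completeness (fun y => exists x, y = f x)) as [L [Hub Hleast]].
  { exists K. intros y [x ->]. apply Hbnd. }
  { exists (f 0). now exists 0. }
  assert (HfL : forall x, f x <= L) by (intros x; apply Hub; now exists x).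
  exists L. split; auto.
  apply (is_lim_spec f p_infty L). intros eps.
  destruct (Classical_Prop.classic (exists x0, L - eps < f x0)) as [[x0 Hx0]|Hn].
  - exists x0. intros x Hx. specialize (Hmono x0 x ltac:(lra)). specialize (HfL x).
    apply Rabs_lt_between'. lra.
  - exfalso. assert (L <= L - eps) by (apply Hleast; intros y [x ->]; apply Rnot_lt_le; eauto).
    generalize (cond_pos eps). lra.
Qed.

Lemma le_is_lim_p_infty (f g : R -> R) (lf lg : R) :
  (exists M, forall x, M < x -> f x <= g x) ->
  is_lim f p_infty lf -> is_lim g p_infty lg -> lf <= lg.
Proof. exact (is_lim_le_loc f g p_infty lf lg). Qed.

Lemma is_lim_p_infty_squeeze (f g : R -> R) :
  is_lim g p_infty 0 -> (forall x, 1 < x -> 0 <= f x <= g x) -> is_lim f p_infty 0.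
Proof.
  intros Hg Hfg. apply (is_lim_le_le_loc (fun _ => 0) g); [|apply is_lim_const | exact Hg].
  exists 1. exact Hfg.
Qed.

Lemma is_lim_inv_p_infty : is_lim (fun x => / x) p_infty 0.
Proof. apply (is_lim_inv (fun x => x) p_infty p_infty); [apply is_lim_id | discriminate]. Qed.

Lemma is_RInt_atan a : is_RInt (fun x => / (1 + x ^ 2)) 0 a (atan a).
Proof.
  replace (atan a) with (minus (atan a) (atan 0))
    by (rewrite atan_0; unfold minus, plus, opp; simpl; ring).
  apply (is_RInt_derive (V := R_CompleteNormedModule)); intros x _.
  - replace (x ^ 2) with (x²) by (unfold Rsqr; ring). apply is_derive_atan.
  - apply (ex_derive_continuous (V := R_NormedModule)). auto_derive.
    apply Rgt_not_eq, one_plus_sq_pos.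
Qed.

Lemma is_lim_atan_p_infty : is_lim atan p_infty (PI / 2).
Proof.
  apply (is_lim_ext_loc (fun x => PI / 2 + - atan (/ x))).
  { exists 0. intros x Hx. rewrite atan_inv by lra. ring. }
  assert (Hatan : is_lim (fun x => atan (/ x)) p_infty (atan 0)).
  { apply is_lim_comp_continuous; [apply is_lim_inv_p_infty | apply continuous_atan]. }
  rewrite atan_0 in Hatan.
  rewrite <- (Rplus_0_r (PI / 2)), <- Ropp_0 at 1.
  apply is_lim_plus'; [apply is_lim_const | apply (is_lim_opp _ _ 0), Hatan].
Qed.

Lemma is_lim_atan_div_2PI : is_lim (fun a => atan a / (2 * PI)) p_infty (1 / 4).
Proof.
  apply (is_lim_ext (fun a => / (2 * PI) * atan a)); [intros; unfold Rdiv; apply Rmult_comm|].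
  replace (1 / 4) with (/ (2 * PI) * (PI / 2)) by (field; apply PI_neq0).
  apply (is_lim_scal_l _ _ p_infty (PI / 2)), is_lim_atan_p_infty.
Qed.

Lemma atan_shift p : 0 < p -> atan p = PI / 4 + atan ((p - 1) / (p + 1)).
Proof.
  intros Hp. rewrite <- atan_1.
  assert (E := atan_sub_correct p 1). unfold atan_sub in E.
  replace (1 + p * 1) with (p + 1) in E by ring. apply E; [lra| |].
  - rewrite atan_1. generalize (atan_increasing 0 p Hp) (atan_bound p) PI_RGT_0. rewrite atan_0. lra.
  - generalize (atan_bound ((p - 1) / (p + 1))). lra.
Qed.

Lemma sqrt_2PI_pos : 0 < sqrt (2 * PI).
Proof. apply sqrt_lt_R0. generalize PI_RGT_0. lra. Qed.

Lemma std_phi_pos x : 0 < std_phi x.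
Proof. apply Rdiv_lt_0_compat; [apply exp_pos | apply sqrt_2PI_pos]. Qed.

Lemma std_phi_opp x : std_phi (- x) = std_phi x.
Proof. unfold std_phi. replace ((- x) ^ 2) with (x ^ 2) by ring. reflexivity. Qed.

Lemma std_phi_le x : std_phi x <= / sqrt (2 * PI).
Proof.
  unfold std_phi, Rdiv. rewrite <- (Rmult_1_l (/ sqrt (2 * PI))) at 2.
  apply Rmult_le_compat_r; [left; apply Rinv_0_lt_compat, sqrt_2PI_pos|].
  rewrite <- exp_0. apply exp_le_exp. generalize (pow2_ge_0 x). lra.
Qed.

Lemma std_phi_mul x y : std_phi x * std_phi y = exp (- (x ^ 2 + y ^ 2) / 2) / (2 * PI).
Proof.
  unfold std_phi. rewrite <- (sqrt_sqrt (2 * PI)) at 3 by (generalize PI_RGT_0; lra).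
  replace (- (x ^ 2 + y ^ 2) / 2) with (- x ^ 2 / 2 + - y ^ 2 / 2) by field.
  rewrite exp_plus. field. apply Rgt_not_eq, sqrt_2PI_pos.
Qed.

Lemma is_derive_std_phi x : is_derive std_phi x (- x * std_phi x).
Proof.
  unfold std_phi. auto_derive; [exact I|].
  replace (- (x * (x * 1)) * / 2) with (- x ^ 2 / 2) by field. field.
  apply Rgt_not_eq, sqrt_2PI_pos.
Qed.

Lemma continuous_std_phi x : continuous std_phi x.
Proof. apply (ex_derive_continuous (V := R_NormedModule)). eexists; apply is_derive_std_phi. Qed.

Lemma ex_RInt_std_phi a b : ex_RInt std_phi a b.
Proof. apply (ex_RInt_continuous (V := R_CompleteNormedModule)). intros; apply continuous_std_phi. Qed.

Lemma is_lim_id_mul_std_phi : is_lim (fun x => x * std_phi x) p_infty 0.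
Proof.
  apply (is_lim_p_infty_squeeze _ (fun x => 2 / sqrt (2 * PI) * / x)).
  { rewrite <- (Rmult_0_r (2 / sqrt (2 * PI))).
    apply (is_lim_scal_l _ _ p_infty 0), is_lim_inv_p_infty. }
  intros x Hx. generalize (std_phi_pos x) sqrt_2PI_pos (exp_neg_sq_half_le x ltac:(lra)).
  intros Hphi Hs Hexp. split; [nra|].
  unfold std_phi. apply (Rmult_le_reg_r (x * sqrt (2 * PI))); [nra|].
  replace (x * (exp (- x ^ 2 / 2) / sqrt (2 * PI)) * (x * sqrt (2 * PI))) with (x ^ 2 * exp (- x ^ 2 / 2))
    by (field; lra).
  replace (2 / sqrt (2 * PI) * / x * (x * sqrt (2 * PI))) with (x ^ 2 * (2 / x ^ 2)) by (field; lra).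
  apply Rmult_le_compat_l; [nra | exact Hexp].
Qed.

Lemma is_lim_std_phi : is_lim std_phi p_infty 0.
Proof.
  apply (is_lim_p_infty_squeeze _ _ is_lim_id_mul_std_phi).
  intros x Hx. generalize (std_phi_pos x). nra.
Qed.

Definition phi_int (x : R) : R := RInt std_phi 0 x.

Lemma is_derive_phi_int x : is_derive phi_int x (std_phi x).
Proof.
  apply (is_derive_RInt (V := R_NormedModule) std_phi phi_int 0); [|apply continuous_std_phi].
  apply filter_forall. intros b. apply (RInt_correct (V := R_CompleteNormedModule)), ex_RInt_std_phi.
Qed.

Lemma is_derive_phi_int_scal a u : is_derive (fun u => phi_int (a * u)) u (a * std_phi (a * u)).
Proof.
  apply (is_derive_comp phi_int (fun u => a * u)); [apply is_derive_phi_int|].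
  auto_derive; auto; ring.
Qed.

Lemma continuous_phi_int_scal a x : continuous (fun u => phi_int (a * u)) x.
Proof. apply (ex_derive_continuous (V := R_NormedModule)). eexists; apply is_derive_phi_int_scal. Qed.

Lemma phi_int_0 : phi_int 0 = 0.
Proof. apply (RInt_point (V := R_CompleteNormedModule)). Qed.

Lemma phi_int_lt x y : x < y -> phi_int x < phi_int y.
Proof.
  intros H. apply (lt_of_derive_pos phi_int std_phi); auto; intros.
  - apply is_derive_phi_int.
  - apply std_phi_pos.
Qed.

Lemma phi_int_le x y : x <= y -> phi_int x <= phi_int y.
Proof. intros [H|<-]; [left; now apply phi_int_lt | apply Rle_refl]. Qed.

Lemma phi_int_opp x : phi_int (- x) = - phi_int x.
Proof.
  unfold phi_int.
  assert (E := RInt_comp_lin (V := R_CompleteNormedModule) std_phi (-1) 0 0 x (ex_RInt_std_phi _ _)).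
  replace (-1 * 0 + 0) with 0 in E by ring. replace (-1 * x + 0) with (- x) in E by ring.
  rewrite <- E, <- (RInt_opp (V := R_CompleteNormedModule)) by apply ex_RInt_std_phi.
  apply RInt_ext. intros t _. unfold scal, opp; simpl; unfold mult; simpl.
  replace (-1 * t + 0) with (- t) by ring. rewrite std_phi_opp. ring.
Qed.

Lemma phi_int_le_lin d : 0 <= d -> phi_int d <= d / sqrt (2 * PI).
Proof.
  intros Hd. unfold phi_int.
  replace (d / sqrt (2 * PI)) with (RInt (fun _ => / sqrt (2 * PI)) 0 d).
  - apply RInt_le; auto using ex_RInt_std_phi, std_phi_le.
    apply (ex_RInt_const (V := R_CompleteNormedModule)).
  - rewrite (RInt_const (V := R_CompleteNormedModule)).
    unfold scal; simpl; unfold mult; simpl. unfold Rdiv. ring.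
Qed.

(* Comparison with [exp (1/2 - t) / sqrt (2 PI)], which dominates the density
   since [t^2 - 2 t + 1 >= 0]. *)
Lemma phi_int_bounded x : phi_int x <= exp (/ 2) / sqrt (2 * PI).
Proof.
  set (K := exp (/ 2) / sqrt (2 * PI)).
  assert (HK : 0 < K) by (apply Rdiv_lt_0_compat; [apply exp_pos | apply sqrt_2PI_pos]).
  destruct (Rle_lt_dec 0 x) as [Hx|Hx].
  2: { generalize (phi_int_lt _ _ Hx). rewrite phi_int_0. lra. }
  assert (H : K * (1 - exp (- 0)) - phi_int 0 <= K * (1 - exp (- x)) - phi_int x).
  { apply (le_of_derive_nonneg (fun t => K * (1 - exp (- t)) - phi_int t)
                                (fun t => K * exp (- t) - std_phi t)); auto; intros t _.
    - apply (is_derive_minus (V := R_NormedModule)); [auto_derive; auto; ring | apply is_derive_phi_int].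
    - assert (exp (- t ^ 2 / 2) <= exp (/ 2) * exp (- t)).
      { rewrite <- exp_plus. apply exp_le_exp. generalize (pow2_ge_0 (t - 1)). lra. }
      assert (0 < / sqrt (2 * PI)) by apply Rinv_0_lt_compat, sqrt_2PI_pos.
      unfold K, std_phi, Rdiv. nra. }
  rewrite Ropp_0, exp_0, phi_int_0 in H. generalize (exp_pos (- x)). nra.
Qed.

Definition phi_int_inf : R :=
  proj1_sig (is_lim_p_infty_of_nondecreasing phi_int _ phi_int_le phi_int_bounded).

Lemma is_lim_phi_int : is_lim phi_int p_infty phi_int_inf.
Proof.
  unfold phi_int_inf.
  exact (proj1 (proj2_sig (is_lim_p_infty_of_nondecreasing phi_int _ phi_int_le phi_int_bounded))).
Qed.

Lemma is_lim_phi_int_scal d : 0 < d -> is_lim (fun a => phi_int (a * d)) p_infty phi_int_inf.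
Proof.
  intros Hd. apply (is_lim_ext (fun a => phi_int (d * a + 0))); [intros; f_equal; ring|].
  apply is_lim_comp_lin; [|lra].
  rewrite (is_Rbar_mult_unique _ _ _ (is_Rbar_mult_sym _ _ _ (is_Rbar_mult_p_infty_pos d Hd))).
  apply is_lim_phi_int.
Qed.

Lemma phi_int_le_inf x : phi_int x <= phi_int_inf.
Proof.
  unfold phi_int_inf.
  exact (proj2 (proj2_sig (is_lim_p_infty_of_nondecreasing phi_int _ phi_int_le phi_int_bounded)) x).
Qed.

Lemma phi_int_inf_pos : 0 < phi_int_inf.
Proof. generalize (phi_int_lt 0 1 Rlt_0_1) (phi_int_le_inf 1). rewrite phi_int_0. lra. Qed.

Lemma is_lim_phi_int_m_infty : is_lim phi_int m_infty (- phi_int_inf).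
Proof.
  apply (is_lim_ext (fun x => - phi_int (- x))).
  { intros x. rewrite phi_int_opp. ring. }
  apply (is_lim_opp (fun x => phi_int (- x)) m_infty phi_int_inf).
  apply (is_lim_comp phi_int Ropp m_infty phi_int_inf p_infty is_lim_phi_int).
  - apply (is_lim_opp (fun x => x) m_infty m_infty), is_lim_id.
  - exists 0. discriminate.
Qed.

Lemma std_Phi_eq x : std_Phi x = phi_int_inf + phi_int x.
Proof.
  unfold std_Phi. apply (is_RInt_gen_unique (V := R_CompleteNormedModule)).
  replace (phi_int_inf + phi_int x) with (phi_int x - - phi_int_inf) by ring.
  apply (is_RInt_gen_of_derive std_phi phi_int).
  - apply is_derive_phi_int.
  - apply continuous_std_phi.
  - apply is_lim_phi_int_m_infty.
  - apply filterlim_at_point.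
Qed.

(** * Owen's T function *)

Definition owen_kernel (h x : R) : R := exp (- h ^ 2 * (1 + x ^ 2) / 2) / (1 + x ^ 2).

Definition owen_T (h a : R) : R := RInt (owen_kernel h) 0 a / (2 * PI).

Lemma owen_kernel_bounds h x : 0 <= owen_kernel h x <= exp (- h ^ 2 / 2).
Proof.
  unfold owen_kernel. generalize (one_plus_sq_pos x) (exp_pos (- h ^ 2 * (1 + x ^ 2) / 2)).
  intros Hx He. split; [left; apply Rdiv_lt_0_compat; auto|].
  apply (Rle_trans _ (exp (- h ^ 2 * (1 + x ^ 2) / 2))).
  - apply (Rmult_le_reg_r (1 + x ^ 2)); [lra|]. unfold Rdiv. rewrite Rmult_assoc, Rinv_l by lra. nra.
  - apply exp_le_exp. generalize (pow2_ge_0 h) (pow2_ge_0 x). nra.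
Qed.

Lemma ex_RInt_owen_kernel h a b : ex_RInt (owen_kernel h) a b.
Proof.
  apply (ex_RInt_continuous (V := R_CompleteNormedModule)). intros x _.
  apply (ex_derive_continuous (V := R_NormedModule)). unfold owen_kernel. auto_derive.
  apply Rgt_not_eq, one_plus_sq_pos.
Qed.

Lemma is_derive_owen_kernel h x :
  is_derive (fun h => owen_kernel h x) h (- h * exp (- h ^ 2 * (1 + x ^ 2) / 2)).
Proof.
  unfold owen_kernel. auto_derive; [exact I|].
  replace (- (h * (h * 1)) * (1 + x * (x * 1)) * / 2) with (- h ^ 2 * (1 + x ^ 2) / 2) by field.
  field. generalize (one_plus_sq_pos x). simpl. lra.
Qed.

Lemma continuity_2d_pt_owen_kernel_deriv h x :
  continuity_2d_pt (fun u v => Derive (fun z => owen_kernel z v) u) h x.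
Proof.
  apply (continuity_2d_pt_ext (fun u v => - u * exp (- u ^ 2 * (1 + v ^ 2) / 2))).
  { intros u v. symmetry. apply is_derive_unique, is_derive_owen_kernel. }
  apply continuity_2d_pt_mult; [apply continuity_2d_pt_opp, continuity_2d_pt_id1|].
  apply (continuity_1d_2d_pt_comp exp (fun u v => - u ^ 2 * (1 + v ^ 2) / 2)).
  { apply continuity_pt_filterlim, continuous_exp. }
  unfold Rdiv. simpl.
  repeat (apply continuity_2d_pt_mult || apply continuity_2d_pt_plus || apply continuity_2d_pt_opp
          || apply continuity_2d_pt_id1 || apply continuity_2d_pt_id2 || apply continuity_2d_pt_const).
Qed.

(* The substitution [t = h x] turns the [x]-integral into [phi_int (a h)]. *)
Lemma RInt_owen_kernel_deriv h a :
  RInt (fun x => - h * exp (- h ^ 2 * (1 + x ^ 2) / 2)) 0 a = - (2 * PI) * std_phi h * phi_int (a * h).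
Proof.
  rewrite (RInt_ext _ (fun x => scal (- (2 * PI) * std_phi h) (scal h (std_phi (h * x + 0))))).
  2: { intros x _. unfold scal; simpl; unfold mult; simpl.
       replace (h * x + 0) with (h * x) by ring.
       replace (- (2 * PI) * std_phi h * (h * std_phi (h * x)))
         with (- h * (2 * PI) * (std_phi h * std_phi (h * x))) by ring.
       rewrite std_phi_mul.
       replace (- (h ^ 2 + (h * x) ^ 2) / 2) with (- (h * (h * 1)) * (1 + x * (x * 1)) / 2) by field.
       field. generalize PI_RGT_0. lra. }
  rewrite (RInt_scal (V := R_CompleteNormedModule))
    by apply (ex_RInt_comp_lin (V := R_CompleteNormedModule)), ex_RInt_std_phi.
  rewrite (RInt_comp_lin (V := R_CompleteNormedModule)) by apply ex_RInt_std_phi.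
  unfold phi_int, scal; simpl; unfold mult; simpl.
  replace (h * 0 + 0) with 0 by ring. replace (h * a + 0) with (a * h) by ring. reflexivity.
Qed.

Lemma is_derive_owen_T h a : is_derive (fun h => owen_T h a) h (- std_phi h * phi_int (a * h)).
Proof.
  apply (is_derive_ext (fun z => / (2 * PI) * RInt (owen_kernel z) 0 a)).
  { intros z. unfold owen_T, Rdiv. apply Rmult_comm. }
  replace (- std_phi h * phi_int (a * h))
    with (/ (2 * PI) * RInt (fun x => - h * exp (- h ^ 2 * (1 + x ^ 2) / 2)) 0 a)
    by (rewrite RInt_owen_kernel_deriv; field; generalize PI_RGT_0; lra).
  apply (is_derive_scal (fun z => RInt (owen_kernel z) 0 a)).
  rewrite (RInt_ext _ _ _ _ (fun x _ => eq_sym (is_derive_unique _ _ _ (is_derive_owen_kernel h x)))).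
  apply is_derive_RInt_param.
  - apply filter_forall. intros z x _. eexists. apply is_derive_owen_kernel.
  - intros x _. apply continuity_2d_pt_owen_kernel_deriv.
  - apply filter_forall. intros z. apply ex_RInt_owen_kernel.
Qed.

Lemma owen_T_0 a : owen_T 0 a = atan a / (2 * PI).
Proof.
  unfold owen_T. f_equal. apply is_RInt_unique.
  apply (is_RInt_ext (fun x => / (1 + x ^ 2))); [|apply is_RInt_atan].
  intros x _. unfold owen_kernel. replace (- 0 ^ 2 * (1 + x ^ 2) / 2) with 0 by field.
  rewrite exp_0. unfold Rdiv. rewrite Rmult_1_l. reflexivity.
Qed.

Lemma owen_T_bounds h a : 0 <= a -> 0 <= owen_T h a <= a * std_phi h / sqrt (2 * PI).
Proof.
  intros Ha. assert (Hpi := PI_RGT_0). unfold owen_T. split.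
  - apply Rdiv_le_0_compat; [|lra].
    apply RInt_ge_0; auto using ex_RInt_owen_kernel. intros; apply owen_kernel_bounds.
  - replace (a * std_phi h / sqrt (2 * PI)) with (RInt (fun _ => exp (- h ^ 2 / 2)) 0 a / (2 * PI)).
    + apply Rmult_le_compat_r; [left; apply Rinv_0_lt_compat; lra|].
      apply RInt_le; auto using ex_RInt_owen_kernel; [|intros; apply owen_kernel_bounds].
      apply (ex_RInt_const (V := R_CompleteNormedModule)).
    + rewrite (RInt_const (V := R_CompleteNormedModule)). unfold scal; simpl; unfold mult; simpl.
      unfold std_phi. rewrite <- (sqrt_sqrt (2 * PI)) at 1 by lra.
      rewrite Rminus_0_r. replace (h * (h * 1)) with (h ^ 2) by ring.
      field. apply Rgt_not_eq, sqrt_2PI_pos.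
Qed.

Lemma is_lim_owen_T a : 0 <= a -> is_lim (fun h => owen_T h a) p_infty 0.
Proof.
  intros Ha. apply (is_lim_p_infty_squeeze _ (fun h => a / sqrt (2 * PI) * std_phi h)).
  - rewrite <- (Rmult_0_r (a / sqrt (2 * PI))). apply (is_lim_scal_l _ _ p_infty 0), is_lim_std_phi.
  - intros h _. unfold Rdiv. rewrite Rmult_assoc, (Rmult_comm (/ _)), <- Rmult_assoc.
    apply owen_T_bounds, Ha.
Qed.

(** * The normalising constant *)

Definition orthant_antideriv (a M : R) : R := phi_int_inf * phi_int M + owen_T M a.

Lemma is_derive_orthant_antideriv a M :
  is_derive (orthant_antideriv a) M ((phi_int_inf - phi_int (a * M)) * std_phi M).
Proof.
  replace ((phi_int_inf - phi_int (a * M)) * std_phi M)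
    with (phi_int_inf * std_phi M + - std_phi M * phi_int (a * M)) by ring.
  apply (is_derive_plus (V := R_NormedModule)).
  - apply (is_derive_scal phi_int), is_derive_phi_int.
  - apply is_derive_owen_T.
Qed.

Lemma orthant_antideriv_0 a : orthant_antideriv a 0 = atan a / (2 * PI).
Proof. unfold orthant_antideriv. rewrite phi_int_0, owen_T_0. ring. Qed.

Lemma is_lim_orthant_antideriv a : 0 <= a ->
  is_lim (orthant_antideriv a) p_infty (phi_int_inf ^ 2).
Proof.
  intros Ha. replace (phi_int_inf ^ 2) with (phi_int_inf * phi_int_inf + 0) by ring.
  apply is_lim_plus'; [|apply is_lim_owen_T, Ha].
  apply (is_lim_scal_l _ _ p_infty phi_int_inf), is_lim_phi_int.
Qed.

Lemma atan_div_2PI_le_phi_int_inf_sq a : 0 <= a -> atan a / (2 * PI) <= phi_int_inf ^ 2.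
Proof.
  intros Ha. rewrite <- orthant_antideriv_0.
  apply (le_is_lim_p_infty (fun _ => orthant_antideriv a 0) (orthant_antideriv a));
    [|apply is_lim_const | apply is_lim_orthant_antideriv, Ha].
  exists 0. intros M HM.
  apply (le_of_derive_nonneg _ (fun t => (phi_int_inf - phi_int (a * t)) * std_phi t) 0 M);
    [lra | intros; apply is_derive_orthant_antideriv|].
  intros t _. apply Rmult_le_pos; [generalize (phi_int_le_inf (a * t)); lra | left; apply std_phi_pos].
Qed.

Lemma orthant_antideriv_incr_le a c x y : x <= y ->
  (forall t, x <= t <= y -> phi_int_inf - c <= phi_int (a * t)) ->
  orthant_antideriv a y - orthant_antideriv a x <= c * (phi_int y - phi_int x).
Proof.
  intros Hxy Hc.
  cut (c * phi_int x - orthant_antideriv a x <= c * phi_int y - orthant_antideriv a y); [lra|].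
  apply (le_of_derive_nonneg (fun M => c * phi_int M - orthant_antideriv a M)
           (fun M => std_phi M * (phi_int (a * M) - (phi_int_inf - c)))); [exact Hxy | intros t Ht ..].
  - replace (std_phi t * (phi_int (a * t) - (phi_int_inf - c)))
      with (c * std_phi t - (phi_int_inf - phi_int (a * t)) * std_phi t) by ring.
    apply (is_derive_minus (V := R_NormedModule)); [apply (is_derive_scal phi_int), is_derive_phi_int|].
    apply is_derive_orthant_antideriv.
  - generalize (Hc t Ht) (std_phi_pos t). nra.
Qed.

(* Split at [d]: the integrand is at most [phi_int_inf * std_phi] on [[0, d]] and at most
   [(phi_int_inf - phi_int (a d)) * std_phi] beyond. *)
Lemma phi_int_inf_sq_le a d : 0 <= a -> 0 <= d ->
  phi_int_inf ^ 2 <= atan a / (2 * PI) + phi_int_inf * phi_int d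
                     + phi_int_inf * (phi_int_inf - phi_int (a * d)).
Proof.
  intros Ha Hd. set (H := orthant_antideriv a). set (c := phi_int_inf - phi_int (a * d)).
  assert (Hc : 0 <= c) by (generalize (phi_int_le_inf (a * d)); unfold c; lra).
  assert (Hd0 : 0 <= phi_int d) by (rewrite <- phi_int_0; apply phi_int_le, Hd).
  assert (Hhead : H d - H 0 <= phi_int_inf * (phi_int d - phi_int 0)).
  { apply orthant_antideriv_incr_le; [exact Hd|]. intros t Ht.
    rewrite Rminus_diag, <- phi_int_0. apply phi_int_le. nra. }
  assert (Htail : forall M, d <= M -> H M <= H d + c * phi_int_inf).
  { intros M HM. assert (H M - H d <= c * (phi_int M - phi_int d)).
    { apply orthant_antideriv_incr_le; [exact HM|]. intros t Ht.
      unfold c. replace (phi_int_inf - (phi_int_inf - phi_int (a * d))) with (phi_int (a * d)) by ring.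
      apply phi_int_le. nra. }
    generalize (phi_int_le_inf M). nra. }
  rewrite phi_int_0 in Hhead. rewrite <- orthant_antideriv_0. fold H. fold c.
  apply (Rle_trans _ (H d + c * phi_int_inf)); [|lra].
  apply (le_is_lim_p_infty H (fun _ => H d + c * phi_int_inf));
    [|apply is_lim_orthant_antideriv, Ha | apply is_lim_const].
  exists d. intros M HM. apply Htail. lra.
Qed.

Lemma phi_int_inf_sq_ge_quarter : 1 / 4 <= phi_int_inf ^ 2.
Proof.
  apply (le_is_lim_p_infty (fun a => atan a / (2 * PI)) (fun _ => phi_int_inf ^ 2));
    [|apply is_lim_atan_div_2PI | apply is_lim_const].
  exists 0. intros a Ha. apply atan_div_2PI_le_phi_int_inf_sq. lra.
Qed.

Lemma phi_int_inf_sq_sub_quarter_le d : 0 < d -> phi_int_inf ^ 2 - 1 / 4 <= phi_int_inf * phi_int d.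
Proof.
  intros Hd.
  assert (phi_int_inf ^ 2 - phi_int_inf * phi_int d - 1 / 4 <= phi_int_inf * (phi_int_inf - phi_int_inf));
    [|lra].
  apply (le_is_lim_p_infty (fun a => phi_int_inf ^ 2 - phi_int_inf * phi_int d + - (atan a / (2 * PI)))
           (fun a => phi_int_inf * (phi_int_inf + - phi_int (a * d)))).
  - exists 0. intros a Ha. generalize (phi_int_inf_sq_le a d ltac:(lra) ltac:(lra)). lra.
  - apply is_lim_plus'; [apply is_lim_const|].
    apply (is_lim_opp _ p_infty (1 / 4)), is_lim_atan_div_2PI.
  - apply (is_lim_scal_l _ _ p_infty (phi_int_inf + - phi_int_inf)).
    apply is_lim_plus'; [apply is_lim_const|].
    apply (is_lim_opp _ p_infty phi_int_inf), is_lim_phi_int_scal, Hd.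
Qed.

(* With [d = e sqrt (2 PI) / (2 phi_int_inf)], the bound [phi_int d <= d / sqrt (2 PI)] turns
   [e := phi_int_inf ^ 2 - 1/4 <= phi_int_inf phi_int d] into [e <= e / 2]. *)
Lemma phi_int_inf_eq : phi_int_inf = 1 / 2.
Proof.
  assert (HZ := phi_int_inf_pos). assert (Hs := sqrt_2PI_pos).
  assert (Hlow := phi_int_inf_sq_ge_quarter).
  assert (Hup : phi_int_inf ^ 2 <= 1 / 4).
  { apply Rnot_lt_le. intros Hlt. set (e := phi_int_inf ^ 2 - 1 / 4).
    set (d := e * sqrt (2 * PI) / (2 * phi_int_inf)).
    assert (Hd : 0 < d) by (apply Rdiv_lt_0_compat; unfold e; nra).
    generalize (phi_int_inf_sq_sub_quarter_le d Hd) (phi_int_le_lin d ltac:(lra)). fold e. intros H1 H2.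
    assert (phi_int_inf * (d / sqrt (2 * PI)) = e / 2) by (unfold d; field; lra).
    assert (phi_int_inf * phi_int d <= phi_int_inf * (d / sqrt (2 * PI))) by (apply Rmult_le_compat_l; lra).
    unfold e in *. lra. }
  nra.
Qed.

(** * The acceptance rate and the diffusion speed *)

Lemma std_Phi_neg_scal a u : std_Phi (- (a * u)) = 1 / 2 - phi_int (a * u).
Proof. rewrite std_Phi_eq, phi_int_opp, phi_int_inf_eq. ring. Qed.

Lemma is_RInt_gen_orthant a : 0 <= a ->
  is_RInt_gen (fun u => (1 / 2 - phi_int (a * u)) * std_phi u) (at_point 0) (Rbar_locally p_infty)
    (1 / 4 - atan a / (2 * PI)).
Proof.
  intros Ha. rewrite <- orthant_antideriv_0.
  replace (1 / 4) with (phi_int_inf ^ 2) by (rewrite phi_int_inf_eq; field).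
  apply (is_RInt_gen_of_derive _ (orthant_antideriv a)).
  - intros M. rewrite <- phi_int_inf_eq at 1. apply is_derive_orthant_antideriv.
  - intros u. apply (continuous_mult (fun u => 1 / 2 - phi_int (a * u))); [|apply continuous_std_phi].
    apply (continuous_minus (fun _ => 1 / 2)); [apply continuous_const | apply continuous_phi_int_scal].
  - apply filterlim_at_point.
  - apply is_lim_orthant_antideriv, Ha.
Qed.

Definition second_moment (a : R) : R := 1 / 4 - atan a / (2 * PI) - a / (2 * PI * (1 + a ^ 2)).

(* Integration by parts of [u * (u phi(u))], using that [a phi(u) phi(a u) / (1 + a^2)]
   is an antiderivative of [- a u phi(u) phi(a u)]. *)
Definition second_moment_antideriv (a M : R) : R :=
  orthant_antideriv a M - M * std_phi M * (1 / 2 - phi_int (a * M))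
  + a / (1 + a ^ 2) * (std_phi M * std_phi (a * M)).

Lemma is_derive_std_phi_mul_scal a M :
  is_derive (fun M => std_phi M * std_phi (a * M)) M (- (1 + a ^ 2) * M * (std_phi M * std_phi (a * M))).
Proof.
  replace (- (1 + a ^ 2) * M * (std_phi M * std_phi (a * M)))
    with (- M * std_phi M * std_phi (a * M) + std_phi M * (a * (- (a * M) * std_phi (a * M)))) by ring.
  apply (is_derive_mult std_phi (fun M => std_phi (a * M)));
    [apply is_derive_std_phi| |intros; apply Rmult_comm].
  apply (is_derive_comp std_phi (fun u => a * u)); [apply is_derive_std_phi | auto_derive; auto; ring].
Qed.

Lemma is_derive_second_moment_boundary a M :
  is_derive (fun M => M * std_phi M * (1 / 2 - phi_int (a * M))) M
    ((1 - M ^ 2) * std_phi M * (1 / 2 - phi_int (a * M)) - a * M * (std_phi M * std_phi (a * M))).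
Proof.
  replace ((1 - M ^ 2) * std_phi M * (1 / 2 - phi_int (a * M)) - a * M * (std_phi M * std_phi (a * M)))
    with ((1 * std_phi M + M * (- M * std_phi M)) * (1 / 2 - phi_int (a * M))
          + M * std_phi M * (0 - a * std_phi (a * M))) by ring.
  apply (is_derive_mult (fun M => M * std_phi M) (fun M => 1 / 2 - phi_int (a * M)));
    [| |intros; apply Rmult_comm].
  - apply (is_derive_mult (fun M => M) std_phi); [apply (is_derive_id (K := R_AbsRing))| |].
    + apply is_derive_std_phi.
    + intros; apply Rmult_comm.
  - apply (is_derive_minus (V := R_NormedModule)); [|apply is_derive_phi_int_scal].
    exact (is_derive_const (K := R_AbsRing) (1 / 2) M).
Qed.

Lemma is_derive_second_moment_antideriv a M :
  is_derive (second_moment_antideriv a) M (M ^ 2 * (1 / 2 - phi_int (a * M)) * std_phi M).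
Proof.
  assert (Ha := one_plus_sq_pos a).
  replace (M ^ 2 * (1 / 2 - phi_int (a * M)) * std_phi M) with
    ((phi_int_inf - phi_int (a * M)) * std_phi M
     - ((1 - M ^ 2) * std_phi M * (1 / 2 - phi_int (a * M)) - a * M * (std_phi M * std_phi (a * M)))
     + a / (1 + a ^ 2) * (- (1 + a ^ 2) * M * (std_phi M * std_phi (a * M))))
    by (rewrite phi_int_inf_eq; field; lra).
  apply (is_derive_plus (V := R_NormedModule)); [apply (is_derive_minus (V := R_NormedModule))|].
  - apply is_derive_orthant_antideriv.
  - apply is_derive_second_moment_boundary.
  - apply (is_derive_scal (fun M => std_phi M * std_phi (a * M))), is_derive_std_phi_mul_scal.
Qed.

Lemma second_moment_antideriv_0 a :
  second_moment_antideriv a 0 = atan a / (2 * PI) + a / (2 * PI * (1 + a ^ 2)).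
Proof.
  unfold second_moment_antideriv. rewrite orthant_antideriv_0, Rmult_0_r, std_phi_mul.
  replace (- (0 ^ 2 + 0 ^ 2) / 2) with 0 by field. rewrite exp_0.
  field. split; [apply Rgt_not_eq, one_plus_sq_pos | apply PI_neq0].
Qed.

Lemma is_lim_second_moment_antideriv a : 0 <= a ->
  is_lim (second_moment_antideriv a) p_infty (1 / 4).
Proof.
  intros Ha. assert (Hs := sqrt_2PI_pos).
  replace (1 / 4) with (phi_int_inf ^ 2 + - 0 + a / (1 + a ^ 2) * 0)
    by (rewrite phi_int_inf_eq; field; apply Rgt_not_eq, one_plus_sq_pos).
  apply is_lim_plus'; [apply is_lim_plus'|].
  - apply is_lim_orthant_antideriv, Ha.
  - apply (is_lim_opp _ p_infty 0).
    apply (is_lim_p_infty_squeeze _ _ is_lim_id_mul_std_phi). intros M HM.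
    assert (0 <= phi_int (a * M)) by (rewrite <- phi_int_0; apply phi_int_le; nra).
    assert (phi_int (a * M) <= 1 / 2) by (rewrite <- phi_int_inf_eq; apply phi_int_le_inf).
    assert (0 < M * std_phi M) by (generalize (std_phi_pos M); nra). cbv beta. split; nra.
  - apply (is_lim_scal_l _ _ p_infty 0).
    apply (is_lim_p_infty_squeeze _ (fun M => / sqrt (2 * PI) * std_phi M)).
    + rewrite <- (Rmult_0_r (/ sqrt (2 * PI))). apply (is_lim_scal_l _ _ p_infty 0), is_lim_std_phi.
    + intros M _. generalize (std_phi_pos M) (std_phi_pos (a * M)) (std_phi_le (a * M)). nra.
Qed.

Lemma is_RInt_gen_second_moment a : 0 <= a ->
  is_RInt_gen (fun u => u ^ 2 * (1 / 2 - phi_int (a * u)) * std_phi u)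
    (at_point 0) (Rbar_locally p_infty) (second_moment a).
Proof.
  intros Ha. replace (second_moment a) with (1 / 4 - second_moment_antideriv a 0)
    by (rewrite second_moment_antideriv_0; unfold second_moment; ring).
  apply (is_RInt_gen_of_derive _ (second_moment_antideriv a)).
  - apply is_derive_second_moment_antideriv.
  - intros u. apply (ex_derive_continuous (V := R_NormedModule)).
    apply ex_derive_mult; [apply ex_derive_mult|eexists; apply is_derive_std_phi].
    + apply (ex_derive_pow (fun u => u)), (ex_derive_id (K := R_AbsRing)).
    + apply (ex_derive_minus (V := R_NormedModule)); [apply ex_derive_const|].
      eexists; apply is_derive_phi_int_scal.
  - apply filterlim_at_point.
  - apply is_lim_second_moment_antideriv, Ha.
Qed.

Lemma std_Phi_proposal_eq l q u : std_Phi (- (u * l * q) / 2) = 1 / 2 - phi_int (l * q / 2 * u).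
Proof. rewrite <- std_Phi_neg_scal. f_equal. field. Qed.

Lemma alpha_acc_eq c I l : 0 <= l * sqrt (c * I) ->
  alpha_acc c I l = 1 - 2 / PI * atan (l * sqrt (c * I) / 2).
Proof.
  intros Hl. set (a := l * sqrt (c * I) / 2). unfold alpha_acc.
  rewrite (is_RInt_gen_unique (V := R_CompleteNormedModule) _ (1 / 4 - atan a / (2 * PI))).
  - field. apply PI_neq0.
  - apply (is_RInt_gen_ext (fun u => (1 / 2 - phi_int (a * u)) * std_phi u)).
    + apply filter_forall. intros _ u _. unfold a. rewrite std_Phi_proposal_eq. reflexivity.
    + apply is_RInt_gen_orthant. unfold a. lra.
Qed.

Definition speed_profile (a : R) : R := a ^ 2 * second_moment a.

Lemma g_c_eq c I l : 0 < c * I -> 0 <= l ->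
  g_c c I l = 16 / I * speed_profile (l * sqrt (c * I) / 2).
Proof.
  intros HcI Hl. assert (Hq := sqrt_lt_R0 _ HcI).
  set (a := l * sqrt (c * I) / 2). unfold g_c, speed_profile.
  rewrite (is_RInt_gen_unique (V := R_CompleteNormedModule) _ (second_moment a)).
  - unfold a. replace ((l * sqrt (c * I) / 2) ^ 2) with (l ^ 2 * (c * I) / 4)
      by (unfold Rdiv; rewrite !Rpow_mult_distr, pow2_sqrt by lra; field).
    field. intros ->. lra.
  - apply (is_RInt_gen_ext (fun u => u ^ 2 * (1 / 2 - phi_int (a * u)) * std_phi u)).
    + apply filter_forall. intros _ u _. unfold a. rewrite std_Phi_proposal_eq. reflexivity.
    + apply is_RInt_gen_second_moment. unfold a. apply Rmult_le_pos; [nra | lra].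
Qed.

(** * Taylor bounds for the arctangent and PI *)

Fixpoint atan_taylor (n : nat) (y : R) : R :=
  match n with
  | O => 0
  | S n => atan_taylor n y + (-1) ^ n * y ^ (2 * n + 1) / INR (2 * n + 1)
  end.

Lemma atan_taylor_0 n : atan_taylor n 0 = 0.
Proof.
  induction n as [|n IH]; simpl; [reflexivity|].
  rewrite IH, Nat.add_1_r, pow_ne_zero by discriminate. unfold Rdiv. ring.
Qed.

Lemma is_derive_atan_taylor n t :
  is_derive (atan_taylor n) t ((1 - (- t ^ 2) ^ n) / (1 + t ^ 2)).
Proof.
  assert (Ht := one_plus_sq_pos t).
  induction n as [|n IH].
  - replace ((1 - (- t ^ 2) ^ 0) / (1 + t ^ 2)) with 0 by (simpl; field; lra).
    exact (is_derive_const (K := R_AbsRing) 0 t).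
  - set (m := (2 * n + 1)%nat).
    apply (is_derive_ext (fun y => atan_taylor n y + (-1) ^ n / INR m * y ^ m)).
    { intros y. cbn [atan_taylor]. fold m. unfold Rdiv.
      rewrite Rmult_assoc, (Rmult_comm (/ INR m)), <- Rmult_assoc. reflexivity. }
    replace ((1 - (- t ^ 2) ^ S n) / (1 + t ^ 2))
      with ((1 - (- t ^ 2) ^ n) / (1 + t ^ 2) + (-1) ^ n / INR m * (INR m * 1 * t ^ Nat.pred m)).
    + apply (is_derive_plus (V := R_NormedModule)); [exact IH|].
      apply (is_derive_scal (fun y => y ^ m)), (is_derive_pow (fun y => y)).
      apply (is_derive_id (K := R_AbsRing)).
    + unfold m. rewrite Nat.add_1_r, Nat.pred_succ, pow_mult.
      replace (- t ^ 2) with (-1 * t ^ 2) by ring. rewrite !Rpow_mult_distr.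
      change ((-1) ^ S n) with (-1 * (-1) ^ n). change ((t ^ 2) ^ S n) with (t ^ 2 * (t ^ 2) ^ n).
      field. split; [lra | apply not_0_INR; discriminate].
Qed.

Lemma atan_taylor_error_sign n y : 0 <= y -> 0 <= (-1) ^ n * (atan y - atan_taylor n y).
Proof.
  intros Hy. replace 0 with ((-1) ^ n * (atan 0 - atan_taylor n 0)) at 1
    by (rewrite atan_0, atan_taylor_0; ring).
  apply (le_of_derive_nonneg (fun t => (-1) ^ n * (atan t - atan_taylor n t))
           (fun t => (t ^ 2) ^ n / (1 + t ^ 2))); [exact Hy | intros t _ ..].
  - replace ((t ^ 2) ^ n / (1 + t ^ 2))
      with ((-1) ^ n * (/ (1 + t²) - (1 - (- t ^ 2) ^ n) / (1 + t ^ 2))).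
    + apply (is_derive_scal (fun t => atan t - atan_taylor n t)).
      apply (is_derive_minus (V := R_NormedModule)); [apply is_derive_atan | apply is_derive_atan_taylor].
    + replace (t²) with (t ^ 2) by (unfold Rsqr; ring).
      replace (- t ^ 2) with (-1 * t ^ 2) by ring. rewrite Rpow_mult_distr.
      transitivity ((-1) ^ n * (-1) ^ n * (t ^ 2) ^ n / (1 + t ^ 2));
        [field; apply Rgt_not_eq, one_plus_sq_pos|].
      rewrite <- Rpow_mult_distr. replace (-1 * -1) with 1 by ring. rewrite pow1. unfold Rdiv. ring.
  - apply Rdiv_le_0_compat; [apply pow_le, pow2_ge_0 | apply one_plus_sq_pos].
Qed.

Lemma atan_upper_deg5 y : 0 <= y -> atan y <= y - y ^ 3 / 3 + y ^ 5 / 5.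
Proof. intros Hy. generalize (atan_taylor_error_sign 3 y Hy). simpl. lra. Qed.

Lemma atan_lower_deg3 y : 0 <= y -> y - y ^ 3 / 3 <= atan y.
Proof. intros Hy. generalize (atan_taylor_error_sign 2 y Hy). simpl. lra. Qed.

Lemma PI_bounds : 3141591 / 1000000 < PI < 3141593 / 1000000.
Proof.
  assert (E := Machin_4_5_239).
  generalize (atan_taylor_error_sign 5 (/ 5) ltac:(lra)) (atan_taylor_error_sign 4 (/ 5) ltac:(lra))
    (atan_taylor_error_sign 3 (/ 239) ltac:(lra)) (atan_taylor_error_sign 2 (/ 239) ltac:(lra)).
  simpl. lra.
Qed.

(** * The optimal scaling *)

Definition critical_fn (a : R) : R := PI / 2 - atan a - a / (1 + a ^ 2) - a / (1 + a ^ 2) ^ 2.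

Lemma is_derive_speed_profile a : is_derive speed_profile a (a / PI * critical_fn a).
Proof.
  assert (Ha := one_plus_sq_pos a). assert (Hpi := PI_RGT_0).
  unfold speed_profile, second_moment, critical_fn. auto_derive.
  - simpl in Ha. apply Rgt_not_eq, Rmult_lt_0_compat; lra.
  - unfold Rsqr. field. split; apply Rgt_not_eq; lra.
Qed.

Lemma is_derive_critical_fn a : is_derive critical_fn a (- (3 - a ^ 2) / (1 + a ^ 2) ^ 3).
Proof.
  assert (Ha := one_plus_sq_pos a). unfold critical_fn. auto_derive.
  - simpl in Ha. repeat split; apply Rgt_not_eq; nra.
  - unfold Rsqr. field. apply Rgt_not_eq, Ha.
Qed.

Lemma critical_fn_lt x y : 0 <= x -> x < y -> y <= 17 / 10 -> critical_fn y < critical_fn x.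
Proof.
  intros Hx Hxy Hy. apply Ropp_lt_cancel.
  apply (lt_of_derive_pos (fun a => - critical_fn a) (fun a => (3 - a ^ 2) / (1 + a ^ 2) ^ 3)); auto.
  - intros t _. replace ((3 - t ^ 2) / (1 + t ^ 2) ^ 3) with (- (- (3 - t ^ 2) / (1 + t ^ 2) ^ 3))
      by (field; apply Rgt_not_eq, one_plus_sq_pos).
    apply (is_derive_opp (V := R_NormedModule)), is_derive_critical_fn.
  - intros t Ht. apply Rdiv_lt_0_compat; [nra | apply pow_lt, one_plus_sq_pos].
Qed.

(* Beyond [17/10], substitute [y = 1/a] and bound [atan y] by its Taylor polynomial of degree 5. *)
Lemma critical_fn_neg_large a : 17 / 10 <= a -> critical_fn a < 0.
Proof.
  intros Ha. set (y := / a).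
  assert (Hy : 0 < y) by (apply Rinv_0_lt_compat; lra).
  assert (Hy2 : y <= 10 / 17) by (unfold y; rewrite <- (Rinv_inv (10 / 17)); apply Rinv_le_contravar; lra).
  assert (Ea : a = / y) by (unfold y; rewrite Rinv_inv; reflexivity).
  assert (Hp := one_plus_sq_pos y).
  unfold critical_fn. rewrite <- atan_inv by lra. fold y.
  replace (a / (1 + a ^ 2)) with (y / (1 + y ^ 2)) by (rewrite Ea; field; lra).
  replace (a / (1 + a ^ 2) ^ 2) with (y ^ 3 / (1 + y ^ 2) ^ 2) by (rewrite Ea; field; lra).
  assert (Hpoly : (y - y ^ 3 / 3 + y ^ 5 / 5) * (1 + y ^ 2) ^ 2 < y * (1 + y ^ 2) + y ^ 3).
  { set (z := y ^ 2). assert (0 < z) by (unfold z; nra). assert (z <= 100 / 289) by (unfold z; nra).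
    assert (D : (y - y ^ 3 / 3 + y ^ 5 / 5) * (1 + z) ^ 2 - (y * (1 + z) + y ^ 3)
                = y * z * (-1 / 3 + 8 * z / 15 + z ^ 2 / 15 + z ^ 3 / 5)) by (unfold z; field).
    assert (-1 / 3 + 8 * z / 15 + z ^ 2 / 15 + z ^ 3 / 5 < 0) by nra.
    assert (0 < y * z) by nra. nra. }
  generalize (atan_upper_deg5 y ltac:(lra)). intros Hatan.
  assert (y / (1 + y ^ 2) + y ^ 3 / (1 + y ^ 2) ^ 2 = (y * (1 + y ^ 2) + y ^ 3) / (1 + y ^ 2) ^ 2)
    by (field; lra).
  assert (y - y ^ 3 / 3 + y ^ 5 / 5 < (y * (1 + y ^ 2) + y ^ 3) / (1 + y ^ 2) ^ 2).
  { apply (Rmult_lt_reg_r ((1 + y ^ 2) ^ 2)); [nra|]. unfold Rdiv. rewrite Rmult_assoc, Rinv_l by nra. lra. }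
  lra.
Qed.

Lemma critical_fn_shift p : 0 < p ->
  critical_fn p = PI / 4 - atan ((p - 1) / (p + 1)) - p / (1 + p ^ 2) - p / (1 + p ^ 2) ^ 2.
Proof. intros Hp. unfold critical_fn. rewrite (atan_shift p Hp). lra. Qed.

Lemma critical_fn_lower_pos : 0 < critical_fn (121275 / 100000).
Proof.
  rewrite critical_fn_shift by lra.
  replace ((121275 / 100000 - 1) / (121275 / 100000 + 1)) with (21275 / 221275) by field.
  generalize PI_bounds (atan_upper_deg5 (21275 / 221275) ltac:(lra)). lra.
Qed.

Lemma critical_fn_upper_neg : critical_fn (121325 / 100000) < 0.
Proof.
  rewrite critical_fn_shift by lra.
  replace ((121325 / 100000 - 1) / (121325 / 100000 + 1)) with (21325 / 221325) by field.
  generalize PI_bounds (atan_taylor_error_sign 4 (21325 / 221325) ltac:(lra)). simpl. lra.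
Qed.

Lemma continuous_critical_fn x : continuous critical_fn x.
Proof. apply (ex_derive_continuous (V := R_NormedModule)). eexists; apply is_derive_critical_fn. Qed.

Lemma critical_fn_root_ex : { r | 121275 / 100000 <= r <= 121325 / 100000 /\ critical_fn r = 0 }.
Proof.
  destruct (IVT_gen critical_fn (121275 / 100000) (121325 / 100000) 0) as [r [Hr Hk]].
  - intros x. apply continuity_pt_filterlim, continuous_critical_fn.
  - generalize critical_fn_lower_pos critical_fn_upper_neg. intros.
    rewrite Rmin_right, Rmax_left by lra. lra.
  - rewrite Rmin_left, Rmax_right in Hr by lra. now exists r.
Qed.

Definition critical_root : R := proj1_sig critical_fn_root_ex.

Lemma critical_root_bounds : 121275 / 100000 <= critical_root <= 121325 / 100000.
Proof. exact (proj1 (proj2_sig critical_fn_root_ex)). Qed.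

Lemma critical_fn_root : critical_fn critical_root = 0.
Proof. exact (proj2 (proj2_sig critical_fn_root_ex)). Qed.

Lemma critical_fn_pos t : 0 <= t < critical_root -> 0 < critical_fn t.
Proof.
  intros Ht. generalize critical_root_bounds. intros. rewrite <- critical_fn_root.
  apply critical_fn_lt; lra.
Qed.

Lemma critical_fn_neg t : critical_root < t -> critical_fn t < 0.
Proof.
  intros Ht. generalize critical_root_bounds. intros.
  destruct (Rle_lt_dec t (17 / 10)).
  - rewrite <- critical_fn_root. apply critical_fn_lt; lra.
  - apply critical_fn_neg_large. lra.
Qed.

Lemma speed_profile_lt_max a : 0 < a -> a <> critical_root -> speed_profile a < speed_profile critical_root.
Proof.
  intros Ha Hne. generalize critical_root_bounds PI_RGT_0. intros Hr Hpi.
  destruct (Rlt_dec a critical_root) as [Hlt|Hge].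
  - apply (lt_of_derive_pos _ (fun t => t / PI * critical_fn t)); auto.
    + intros; apply is_derive_speed_profile.
    + intros t Ht. apply Rmult_lt_0_compat; [apply Rdiv_lt_0_compat; lra | apply critical_fn_pos; lra].
  - apply Ropp_lt_cancel.
    apply (lt_of_derive_pos (fun t => - speed_profile t) (fun t => - (t / PI * critical_fn t))); [lra| |].
    + intros; apply (is_derive_opp (V := R_NormedModule)), is_derive_speed_profile.
    + intros t Ht. generalize (critical_fn_neg t ltac:(lra)). intros.
      assert (0 < t / PI) by (apply Rdiv_lt_0_compat; lra). nra.
Qed.

Lemma acceptance_at_critical_root : Rabs (1 - 2 / PI * atan critical_root - 439 / 1000) <= 5 / 10000.
Proof.
  generalize critical_root_bounds PI_bounds. intros Hr HPI.
  rewrite (atan_shift critical_root) by lra.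
  set (z := (critical_root - 1) / (critical_root + 1)).
  assert (Hz1 : 21275 / 221275 <= z).
  { unfold z. apply (Rmult_le_reg_r ((critical_root + 1) * 221275)); [lra|].
    unfold Rdiv. field_simplify; lra. }
  assert (Hz2 : z <= 21325 / 221325).
  { unfold z. apply (Rmult_le_reg_r ((critical_root + 1) * 221325)); [lra|].
    unfold Rdiv. field_simplify; lra. }
  assert (Hup : atan z <= 21325 / 221325).
  { apply (Rle_trans _ (z - z ^ 3 / 3 + z ^ 5 / 5)); [apply atan_upper_deg5; lra|].
    assert (0 <= z ^ 3) by (apply pow_le; lra).
    assert (z ^ 2 <= 1) by nra.
    assert (z ^ 5 = z ^ 3 * z ^ 2) by ring. nra. }
  assert (Hlow : 21275 / 221275 - (21275 / 221275) ^ 3 / 3 <= atan z).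
  { apply (Rle_trans _ (atan (21275 / 221275))); [apply atan_lower_deg3; lra|].
    destruct Hz1 as [Hlt|Heq]; [left; apply atan_increasing, Hlt | rewrite Heq; apply Rle_refl]. }
  replace (1 - 2 / PI * (PI / 4 + atan z) - 439 / 1000) with (61 / 1000 - 2 * atan z / PI) by (field; lra).
  assert (605 / 10000 * PI <= 2 * atan z <= 615 / 10000 * PI) by lra.
  apply Rabs_le. split.
  - apply (Rmult_le_reg_r PI); [lra|]. unfold Rdiv. field_simplify; lra.
  - apply (Rmult_le_reg_r PI); [lra|]. unfold Rdiv. field_simplify; lra.
Qed.

Theorem corollary2 (I c : R) (hI : 0 < I) (hc0 : 0 < c) (hc1 : c <= 1) :
  (exists lopt : R, 0 < lopt /\ forall l : R, 0 < l -> g_c c I l <= g_c c I lopt) /\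
  (forall lopt : R, 0 < lopt ->
     (forall l : R, 0 < l -> g_c c I l <= g_c c I lopt) ->
     Rabs (lopt * sqrt (c * I) - 2426 / 1000) <= 5 / 10000 /\
     Rabs (alpha_acc c I lopt - 439 / 1000) <= 5 / 10000).
Proof.
  assert (HcI : 0 < c * I) by nra.
  set (q := sqrt (c * I)). assert (Hq : 0 < q) by (apply sqrt_lt_R0, HcI).
  assert (H16 : 0 < 16 / I) by (apply Rdiv_lt_0_compat; lra).
  assert (Hr := critical_root_bounds).
  assert (Hg : forall l, 0 < l -> g_c c I l = 16 / I * speed_profile (l * q / 2))
    by (intros; apply g_c_eq; lra).
  set (l0 := 2 * critical_root / q).
  assert (Hl0 : 0 < l0) by (apply Rdiv_lt_0_compat; lra).
  assert (El0 : l0 * q / 2 = critical_root) by (unfold l0; field; lra).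
  assert (Hmax : forall l, 0 < l -> l * q / 2 <> critical_root -> g_c c I l < g_c c I l0).
  { intros l Hl Hne. rewrite !Hg, El0 by lra. apply Rmult_lt_compat_l; [lra|].
    apply speed_profile_lt_max; [apply Rdiv_lt_0_compat; nra | exact Hne]. }
  split.
  - exists l0. split; [exact Hl0|]. intros l Hl.
    destruct (Req_dec (l * q / 2) critical_root) as [E|E].
    + rewrite !Hg, E, El0 by lra. lra.
    + left. apply Hmax; assumption.
  - intros lopt Hlopt Hopt.
    assert (Ea : lopt * q / 2 = critical_root).
    { destruct (Req_dec (lopt * q / 2) critical_root) as [E|E]; [exact E|].
      generalize (Hmax lopt Hlopt E) (Hopt l0 Hl0). lra. }
    split.
    + fold q. apply Rabs_le. lra.
    + rewrite alpha_acc_eq by (fold q; nra). fold q. rewrite Ea. apply acceptance_at_critical_root.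
Qed.
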